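(* Let $\mathcal H$ be a Hilbert space of dimension $d$, let $H(t_i)=\sum_l E^i_l\Pi^i_l$ and $H(t_f)=\sum_k E^f_k\Pi^f_k$ be Hermitian operators on $\mathcal H$ with spectral projectors $\Pi^i_l,\Pi^f_k$, let $\Phi$ be a CPTP map on $\mathcal H$ and $\beta>0$. Let $\gamma_{\beta,i}=e^{-\beta H(t_i)}/\mathcal Z_{\beta,i}$, $\gamma_{\beta,f}=e^{-\beta H(t_f)}/\mathcal Z_{\beta,f}$ with $\mathcal Z_{\beta,i}=\mathrm{Tr}\,e^{-\beta H(t_i)}$, $\mathcal Z_{\beta,f}=\mathrm{Tr}\,e^{-\beta H(t_f)}$, and $\Delta F=-\beta^{-1}\ln(\mathcal Z_{\beta,f}/\mathcal Z_{\beta,i})$. Let $\rho_i$ be a density operator written as $\rho_i=(1-a)\gamma_{\beta,i}+a\tau$, where $a=A_w(\rho_i)$ is the weight of athermality of $\rho_i$ with respect to $\gamma_{\beta,i}$ and $\tau$ the corresponding minimal athermal state. Then the end-point-measurement average satisfies $$\big\langle e^{-\beta(\Delta E-\Delta F)}\big\rangle=\Big\{(1-a)d+a\,\mathrm{Tr}\big(\gamma_{\beta,i}^{-1}\tau\big)\Big\}\Big\{(1-a)\,\mathrm{Tr}\big(\gamma_{\beta,f}\Phi[\gamma_{\beta,i}]\big)+a\,\mathrm{Tr}\big(\gamma_{\beta,f}\Phi[\tau]\big)\Big\}.$$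
   Context: End-point-measurement (EPM) statistics: for an initial state $\rho_i$, the joint distribution is $p^{l,k}=\mathrm{Tr}(\rho_i\Pi^i_l)\,\mathrm{Tr}(\Phi[\rho_i]\Pi^f_k)$, the energy change along $(l,k)$ is $\Delta E_{l,k}=E^f_k-E^i_l$, and for a function $g$, $\langle g(\Delta E)\rangle:=\sum_{l,k}p^{l,k}g(\Delta E_{l,k})$. Weight of athermality: $A_w(\rho)=\min_{\tau\in\mathscr D(\mathcal H)}\{a\ge0:\rho=(1-a)\gamma_{\beta,i}+a\tau\}$, where $\mathscr D(\mathcal H)$ is the set of density operators; the minimal athermal state is the density operator $\tau$ attaining the minimum. *)

From HB Require Import structures.
From mathcomp Require Import all_boot all_order all_algebra.
From mathcomp Require Import reals.
From mathcomp.analysis Require Import sequences exp.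
From mathcomp.real_closed Require Import complex.

Set Implicit Arguments.
Unset Strict Implicit.
Unset Printing Implicit Defensive.

Import Order.TTheory GRing.Theory Num.Theory.
Local Open Scope ring_scope.
Local Open Scope complex_scope.

Section QDefs.
Variable R : realType.
Local Notation C := (R[i]).
Variable d : nat.

Definition adjmx (m n : nat) (A : 'M[C]_(m, n)) : 'M[C]_(n, m) :=
  \matrix_(i, j) (A j i)^*.

(* positive semidefinite: <v, A v> is real and nonnegative for every v *)
Definition psd (A : 'M[C]_d) : Prop :=
  forall v : 'cV[C]_d, 0 <= (adjmx v *m A *m v) 0 0.

Definition density (rho : 'M[C]_d) : Prop := psd rho /\ \tr rho = 1.

(* positive semidefiniteness of an n x n block operator on C^n (x) C^d,
   given by its d x d blocks X a b *)
Definition block_psd (n : nat) (X : 'I_n -> 'I_n -> 'M[C]_d) : Prop :=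
  forall v : 'I_n -> 'cV[C]_d,
    0 <= \sum_(a < n) \sum_(b < n) (adjmx (v a) *m X a b *m v b) 0 0.

(* id_n (x) Phi preserves positivity for every n *)
Definition completely_positive (Phi : 'M[C]_d -> 'M[C]_d) : Prop :=
  forall (n : nat) (X : 'I_n -> 'I_n -> 'M[C]_d),
    block_psd X -> block_psd (fun a b => Phi (X a b)).

Definition trace_preserving (Phi : 'M[C]_d -> 'M[C]_d) : Prop :=
  forall X : 'M[C]_d, \tr (Phi X) = \tr X.

Definition CPTP (Phi : 'M[C]_d -> 'M[C]_d) : Prop :=
  completely_positive Phi /\ trace_preserving Phi.

Definition spectral_decomposition (m : nat) (H : 'M[C]_d)
    (E : 'I_m -> R) (P : 'I_m -> 'M[C]_d) : Prop :=
  [/\ injective E,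
      (forall l, P l != 0) /\ (forall l, adjmx (P l) = P l),
      (forall l k, P l *m P k = if l == k then P l else 0),
      \sum_(l < m) P l = 1%:M
    & H = \sum_(l < m) (E l)%:C *: P l].

Definition exp_mbetaH (m : nat) (beta : R) (E : 'I_m -> R) (P : 'I_m -> 'M[C]_d)
  : 'M[C]_d := \sum_(l < m) (expR (- (beta * E l)))%:C *: P l.

Definition partZ (m : nat) (beta : R) (E : 'I_m -> R) (P : 'I_m -> 'M[C]_d) : R :=
  complex.Re (\tr (exp_mbetaH beta E P)).

Definition gibbs (m : nat) (beta : R) (E : 'I_m -> R) (P : 'I_m -> 'M[C]_d)
  : 'M[C]_d := ((partZ beta E P)^-1)%:C *: exp_mbetaH beta E P.

Definition deltaF (mi mf : nat) (beta : R)
    (Ei : 'I_mi -> R) (Pi : 'I_mi -> 'M[C]_d)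
    (Ef : 'I_mf -> R) (Pf : 'I_mf -> 'M[C]_d) : R :=
  - (beta^-1 * ln (partZ beta Ef Pf / partZ beta Ei Pi)).

Definition epm_avg (mi mf : nat) (rho : 'M[C]_d) (Phi : 'M[C]_d -> 'M[C]_d)
    (Ei : 'I_mi -> R) (Pi : 'I_mi -> 'M[C]_d)
    (Ef : 'I_mf -> R) (Pf : 'I_mf -> 'M[C]_d) (g : R -> R) : C :=
  \sum_(l < mi) \sum_(k < mf)
     (\tr (rho *m Pi l) * \tr (Phi rho *m Pf k)) * (g (Ef k - Ei l))%:C.

(* a = A_w(rho) (weight of athermality w.r.t. gam) and tau is a minimal
   athermal state: (a, tau) attains the minimum in
   A_w(rho) = min_{tau density} { a >= 0 : rho = (1-a) gam + a tau } *)
Definition weight_of_athermality (gam rho : 'M[C]_d) (a : R) (tau : 'M[C]_d)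
  : Prop :=
  [/\ density tau, 0 <= a,
      rho = (1 - a)%:C *: gam + a%:C *: tau
    & forall (a' : R) (tau' : 'M[C]_d), density tau' -> 0 <= a' ->
        rho = (1 - a')%:C *: gam + a'%:C *: tau' -> a <= a'].

End QDefs.

From HB Require Import structures.
From mathcomp Require Import all_boot all_order all_algebra.
From mathcomp Require Import reals.
From mathcomp.analysis Require Import sequences exp.
From mathcomp.real_closed Require Import complex.
From mathcomp Require Import ring.

(* With the Gibbs weights p_l = e^{-beta E_l} / Z, the exponentiated work
   factorizes as e^{-beta (E^f_k - E^i_l - Delta F)} = p^f_k / p^i_l.  Hence the
   EPM average is Tr(gamma_i^-1 rho) Tr(gamma_f Phi[rho]), a product of two
   linear functions of rho; substituting rho = (1 - a) gamma_i + a tau and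
   Tr(gamma_i^-1 gamma_i) = d gives the formula. *)

Set Implicit Arguments.
Unset Strict Implicit.
Unset Printing Implicit Defensive.

Import Order.TTheory GRing.Theory Num.Theory.
Local Open Scope ring_scope.
Local Open Scope complex_scope.

Section SpectralSum.
Variables (F : fieldType) (d m : nat) (P : 'I_m -> 'M[F]_d).

Definition spectral_sum (c : 'I_m -> F) : 'M[F]_d := \sum_(l < m) c l *: P l.

Lemma mxtrace_mul_spectral_sum (c : 'I_m -> F) (X : 'M[F]_d) :
  \tr (spectral_sum c *m X) = \sum_(l < m) c l * \tr (X *m P l).
Proof.
rewrite mulmx_suml linear_sum /=; apply: eq_bigr => l _.
by rewrite -scalemxAl mxtraceZ mxtrace_mulC.
Qed.

Hypothesis P_orth : forall l k, P l *m P k = if l == k then P l else 0.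
Hypothesis P_sum : \sum_(l < m) P l = 1%:M.

Lemma spectral_sumM (c c' : 'I_m -> F) :
  spectral_sum c *m spectral_sum c' = spectral_sum (fun l => c l * c' l).
Proof.
rewrite mulmx_suml; apply: eq_bigr => l _.
rewrite mulmx_sumr (bigD1 l) //= big1 ?addr0 => [|k /negbTE neq_kl].
  by rewrite -scalemxAl -scalemxAr P_orth eqxx scalerA.
by rewrite -scalemxAl -scalemxAr P_orth eq_sym neq_kl !scaler0.
Qed.

Lemma spectral_sum1 : spectral_sum (fun => 1) = 1%:M.
Proof. by rewrite -P_sum; apply: eq_bigr => l _; rewrite scale1r. Qed.

Lemma mulmx_spectral_sumV (c : 'I_m -> F) : (forall l, c l != 0) ->
  spectral_sum c *m spectral_sum (fun l => (c l)^-1) = 1%:M.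
Proof.
move=> c_neq0; rewrite spectral_sumM -spectral_sum1.
by apply: eq_bigr => l _; rewrite mulfV.
Qed.

Lemma spectral_sum_unitmx (c : 'I_m -> F) : (forall l, c l != 0) ->
  spectral_sum c \in unitmx.
Proof. by move/mulmx_spectral_sumV/mulmx1_unit => []. Qed.

Lemma invmx_spectral_sum (c : 'I_m -> F) : (forall l, c l != 0) ->
  invmx (spectral_sum c) = spectral_sum (fun l => (c l)^-1).
Proof.
move=> c_neq0; have cV1 := mulmx_spectral_sumV c_neq0.
by rewrite -[RHS](mulKmx (spectral_sum_unitmx c_neq0)) cV1 mulmx1.
Qed.

End SpectralSum.

Section Positivity.
Variables (R : realType) (d : nat).
Local Notation C := (R[i]).

Lemma mxtrace_proj_gt0 (P : 'M[C]_d) :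
  P != 0 -> adjmx P = P -> P *m P = P -> 0 < \tr P.
Proof.
move=> P_neq0 P_herm P_idem.
(* tr P = tr (P adj(P)) is the squared Frobenius norm of P *)
have trPE : \tr P = \sum_(p : 'I_d * 'I_d) P p.1 p.2 * (P p.1 p.2)^*.
  rewrite -(pair_bigA _ (fun i j => P i j * (P i j)^*)) -{1}P_idem.
  apply: eq_bigr => i _; rewrite mxE; apply: eq_bigr => j _.
  by rewrite -{2}P_herm mxE.
rewrite trPE lt_def sumr_ge0 ?andbT => [|p _]; last exact: mulcJ_ge0.
rewrite psumr_eq0 => [|p _]; last exact: mulcJ_ge0.
apply: contra P_neq0 => /allP P0; apply/eqP/matrixP => i j; rewrite mxE.
have /implyP := P0 (i, j) (mem_index_enum _).
by rewrite -sqr_normc sqrf_eq0 normr_eq0 => /(_ isT)/eqP.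
Qed.

Variables (m : nat) (P : 'I_m -> 'M[C]_d).
Hypothesis P_neq0 : forall l, P l != 0.
Hypothesis P_herm : forall l, adjmx (P l) = P l.
Hypothesis P_orth : forall l k, P l *m P k = if l == k then P l else 0.

Lemma spectral_sum_mxtrace_gt0 (c : 'I_m -> C) :
  (0 < m)%N -> (forall l, 0 < c l) -> 0 < \tr (spectral_sum P c).
Proof.
move=> m_gt0 c_gt0; rewrite -[spectral_sum P c]mulmx1 mxtrace_mul_spectral_sum.
have trP_gt0 l : 0 < \tr (1%:M *m P l).
  by rewrite mul1mx mxtrace_proj_gt0 // P_orth eqxx.
rewrite (bigD1 (Ordinal m_gt0)) //= ltr_wpDr ?mulr_gt0 //.
by rewrite sumr_ge0 // => l _; rewrite mulr_ge0 ?ltW.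
Qed.

End Positivity.

Section Gibbs.
Variables (R : realType) (d m : nat) (beta : R).
Local Notation C := (R[i]).
Variables (E : 'I_m -> R) (P : 'I_m -> 'M[C]_d).

Definition gibbs_weight (l : 'I_m) : R := expR (- (beta * E l)) / partZ beta E P.

Lemma gibbsE : gibbs beta E P = spectral_sum P (fun l => (gibbs_weight l)%:C).
Proof.
rewrite /gibbs /exp_mbetaH scaler_sumr; apply: eq_bigr => l _.
by rewrite scalerA -rmorphM mulrC.
Qed.

Variable H : 'M[C]_d.
Hypothesis sdH : spectral_decomposition H E P.
Hypothesis d_gt0 : (0 < d)%N.

Lemma partZ_gt0 : 0 < partZ beta E P.
Proof.
have [_ [P_neq0 P_herm] P_orth P_sum _] := sdH.
have m_gt0 : (0 < m)%N.
  move: P_sum; case: m P => // Q.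
  rewrite big_ord0 => /matrixP/(_ (Ordinal d_gt0) (Ordinal d_gt0)).
  by rewrite !mxE eqxx => /eqP; rewrite eq_sym oner_eq0.
have : 0 < \tr (exp_mbetaH beta E P).
  by apply: spectral_sum_mxtrace_gt0 => // l; rewrite ltcR expR_gt0.
by rewrite ltcE => /andP[].
Qed.

Lemma gibbs_weight_neq0 (l : 'I_m) : (gibbs_weight l)%:C != 0.
Proof. by rewrite gt_eqF // ltcR divr_gt0 ?expR_gt0 ?partZ_gt0. Qed.

Lemma gibbs_unitmx : gibbs beta E P \in unitmx.
Proof.
have [_ _ P_orth P_sum _] := sdH.
by rewrite gibbsE spectral_sum_unitmx // => l; apply: gibbs_weight_neq0.
Qed.

Lemma invmx_gibbs :
  invmx (gibbs beta E P) = spectral_sum P (fun l => ((gibbs_weight l)%:C)^-1).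
Proof.
have [_ _ P_orth P_sum _] := sdH.
by rewrite gibbsE invmx_spectral_sum // => l; apply: gibbs_weight_neq0.
Qed.

End Gibbs.

Section EndPointMeasurement.
Variables (R : realType) (d mi mf : nat) (beta : R).
Local Notation C := (R[i]).
Variables (Ei : 'I_mi -> R) (Pi : 'I_mi -> 'M[C]_d).
Variables (Ef : 'I_mf -> R) (Pf : 'I_mf -> 'M[C]_d).

Lemma expR_work_gibbs_weight (l : 'I_mi) (k : 'I_mf) :
  0 < beta -> 0 < partZ beta Ei Pi -> 0 < partZ beta Ef Pf ->
  expR (- (beta * ((Ef k - Ei l) - deltaF beta Ei Pi Ef Pf))) =
  (gibbs_weight beta Ei Pi l)^-1 * gibbs_weight beta Ef Pf k.
Proof.
rewrite /deltaF /gibbs_weight; set Zi := partZ _ _ _; set Zf := partZ _ _ _.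
move=> beta_gt0 Zi_gt0 Zf_gt0.
have -> : - (beta * ((Ef k - Ei l) - - (beta^-1 * ln (Zf / Zi)))) =
          - (beta * Ef k) + (beta * Ei l - ln (Zf / Zi)).
  by field; rewrite gt_eqF.
rewrite !expRD !expRN lnK ?posrE ?divr_gt0 //.
by field; rewrite !gt_eqF ?expR_gt0.
Qed.

Lemma epm_avg_split (rho : 'M[C]_d) (Phi : 'M[C]_d -> 'M[C]_d) (g : R -> R)
    (u : 'I_mi -> C) (w : 'I_mf -> C) :
  (forall l k, (g (Ef k - Ei l))%:C = u l * w k) ->
  epm_avg rho Phi Ei Pi Ef Pf g =
  \tr (spectral_sum Pi u *m rho) * \tr (spectral_sum Pf w *m Phi rho).
Proof.
move=> g_split; rewrite !mxtrace_mul_spectral_sum big_distrl.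
apply: eq_bigr => l _; rewrite big_distrr; apply: eq_bigr => k _ /=.
by rewrite g_split [RHS]mulrACA mulrC.
Qed.

Variables (Hi Hf : 'M[C]_d).
Hypothesis sdHi : spectral_decomposition Hi Ei Pi.
Hypothesis sdHf : spectral_decomposition Hf Ef Pf.
Hypothesis beta_gt0 : 0 < beta.
Hypothesis d_gt0 : (0 < d)%N.

Lemma epm_avg_expR_work (rho : 'M[C]_d) (Phi : 'M[C]_d -> 'M[C]_d) :
  epm_avg rho Phi Ei Pi Ef Pf
    (fun dE => expR (- (beta * (dE - deltaF beta Ei Pi Ef Pf)))) =
  \tr (invmx (gibbs beta Ei Pi) *m rho) * \tr (gibbs beta Ef Pf *m Phi rho).
Proof.
rewrite (invmx_gibbs beta sdHi d_gt0) gibbsE; apply: epm_avg_split => l k.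
rewrite expR_work_gibbs_weight ?(partZ_gt0 _ sdHi) ?(partZ_gt0 _ sdHf) //.
by rewrite rmorphM fmorphV.
Qed.

End EndPointMeasurement.

Lemma mxtrace_dim0 (F : comPzRingType) (A : 'M[F]_0) : \tr A = 0.
Proof. by rewrite [A]flatmx0 mxtrace0. Qed.

Lemma mxtrace_mixture (F : fieldType) (n : nat) (Phi : {linear 'M[F]_n -> 'M[F]_n})
    (G Gf T : 'M[F]_n) (s t : F) :
  G \in unitmx ->
  \tr (invmx G *m (s *: G + t *: T)) * \tr (Gf *m Phi (s *: G + t *: T)) =
  (s * n%:R + t * \tr (invmx G *m T)) *
  (s * \tr (Gf *m Phi G) + t * \tr (Gf *m Phi T)).
Proof. by move=> G_unit; rewrite !linearD !linearZ /= mulVmx // mxtrace1. Qed.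

Theorem mainTheorem2 (R : realType) (d mi mf : nat)
    (Hi : 'M[R[i]]_d) (Ei : 'I_mi -> R) (Pi : 'I_mi -> 'M[R[i]]_d)
    (Hf : 'M[R[i]]_d) (Ef : 'I_mf -> R) (Pf : 'I_mf -> 'M[R[i]]_d)
    (Phi : {linear 'M[R[i]]_d -> 'M[R[i]]_d}) (beta : R)
    (rho tau : 'M[R[i]]_d) (a : R) :
  spectral_decomposition Hi Ei Pi ->
  spectral_decomposition Hf Ef Pf ->
  CPTP Phi ->
  0 < beta ->
  density rho ->
  weight_of_athermality (gibbs beta Ei Pi) rho a tau ->
  epm_avg rho Phi Ei Pi Ef Pf
    (fun dE => expR (- (beta * (dE - deltaF beta Ei Pi Ef Pf)))) =
  ((1 - a)%:C * d%:R + a%:C * \tr (invmx (gibbs beta Ei Pi) *m tau)) *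
  ((1 - a)%:C * \tr (gibbs beta Ef Pf *m Phi (gibbs beta Ei Pi))
   + a%:C * \tr (gibbs beta Ef Pf *m Phi tau)).
Proof.
move=> sdHi sdHf _ beta_gt0 _ [_ _ rhoE _].
have [d0 | d_gt0] := posnP d.
  subst d; rewrite !mxtrace_dim0 !mulr0 addr0 mul0r /epm_avg big1 // => l _.
  by rewrite big1 // => k _; rewrite !mxtrace_dim0 !mul0r.
rewrite (epm_avg_expR_work sdHi sdHf) // rhoE.
by rewrite mxtrace_mixture // (gibbs_unitmx _ sdHi).
Qed.
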